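(* Let $k\ge 2$, let $G$ be a $\Gamma_{\times k,t}$-external graph with $\delta(G)\ge k$, and let $H$ be a graph. (i) If $\delta(H)\ge k+1$, then $\Gamma_{\times k,t}(G\,\Box\,H)\ge\Gamma_{\times k,t}(G)\big(\Gamma_{\times k,t}(H)+\delta(H)-k\big)$. (ii) If $H$ is $k$-regular, then $\Gamma_{\times k,t}(G\,\Box\,H)\ge\Gamma_{\times k,t}(G)\cdot\Gamma_{\times k,t}(H)$.
   Context: A set $S\subseteq V(G)$ is a $k$-tuple total dominating set ($k$TDS) of a graph $G$ with $\delta(G)\ge k$ if $|N_G(x)\cap S|\ge k$ for every $x\in V(G)$. The upper $k$-tuple total domination number $\Gamma_{\times k,t}(G)$ is the maximum cardinality of a minimal (with respect to inclusion) $k$TDS of $G$; a minimal $k$TDS of this cardinality is a $\Gamma_{\times k,t}$-set. For $v\in S$, a vertex $v'$ is a $k$-open private neighbor of $v$ with respect to $S$ if $v\in N_G(v')$ and $|N_G(v')\cap S|=k$; it is external if $v'\notin S$. A graph $G$ is $\Gamma_{\times k,t}$-external if it has a $\Gamma_{\times k,t}$-set $S$ such that every vertex of $S$ has an external $k$-open private neighbor with respect to $S$. The Cartesian product $G\,\Box\,H$ has vertex set $V(G)\times V(H)$, with $(g_1,h_1)\sim(g_2,h_2)$ iff either $g_1=g_2$ and $h_1h_2\in E(H)$, or $h_1=h_2$ and $g_1g_2\in E(G)$. *)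

From mathcomp Require Import all_boot.
Set Implicit Arguments. Unset Strict Implicit. Unset Printing Implicit Defensive.

Section Graphs.
Variable T : finType.
Implicit Types (e : rel T) (S : {set T}) (k : nat).

Definition simple_graph e := irreflexive e /\ symmetric e.

Definition nbhd e (x : T) : {set T} := [set y | e x y].

(* minimum degree delta(G); the default #|T| is irrelevant for nonempty T *)
Definition mindeg e : nat := \big[minn/#|T|]_(x : T) #|nbhd e x|.

Definition regular e k := forall x : T, #|nbhd e x| = k.

Definition is_kTDS e k S : bool := [forall x : T, k <= #|nbhd e x :&: S|].

Definition is_min_kTDS e k S : bool :=
  is_kTDS e k S && [forall S' : {set T}, (S' \proper S) ==> ~~ is_kTDS e k S'].

Definition upper_kTDN e k : nat := \max_(S : {set T} | is_min_kTDS e k S) #|S|.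

Definition is_Gamma_set e k S : bool := is_min_kTDS e k S && (#|S| == upper_kTDN e k).

Definition ext_kopn e k S (v v' : T) : bool :=
  [&& v \in nbhd e v', v' \notin S & #|nbhd e v' :&: S| == k].

Definition Gamma_external e k : Prop :=
  exists S : {set T}, is_Gamma_set e k S /\
    forall v, v \in S -> exists v' : T, ext_kopn e k S v v'.
End Graphs.

Definition cartesian (T1 T2 : finType) (e1 : rel T1) (e2 : rel T2) : rel (T1 * T2) :=
  fun u w => ((u.1 == w.1) && e2 u.2 w.2) || ((u.2 == w.2) && e1 u.1 w.1).

(* If S is a Gamma_{x k,t}-set of G all of whose
   vertices have external k-open private neighbours, then S x V(H) is a minimal
   kTDS of G [] H: a private neighbour s' of s in G, being outside S, sees S x V(H)
   from (s', b) only through the G-layer of b, so (s', b) is a private neighbour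
   of (s, b).  Hence Gamma(G [] H) >= Gamma(G) |V(H)|, and |V(H)| dominates both
   Gamma(H) and Gamma(H) + delta(H) - k, the latter because every vertex of a
   minimal kTDS D has a private neighbour u, whose at least delta(H) neighbours
   are the k in D and the others outside D. *)
From mathcomp Require Import all_boot.
From mathcomp Require Import zify.

Set Implicit Arguments.
Unset Strict Implicit.
Unset Printing Implicit Defensive.

Section MinimalKTDS.
Variables (T : finType) (e : rel T) (k : nat).
Implicit Types (S D : {set T}) (u v x : T).

Definition kopn S v u : bool := (v \in nbhd e u) && (#|nbhd e u :&: S| == k).

Lemma mindeg_le_deg x : mindeg e <= #|nbhd e x|.
Proof.
rewrite /mindeg; elim: (index_enum T) (mem_index_enum x) => // y r IH.
rewrite inE big_cons => /orP [/eqP <-|/IH]; first exact: geq_minl.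
by rewrite geq_min => ->; rewrite orbT.
Qed.

Lemma mindeg_le_card : mindeg e <= #|T|.
Proof.
rewrite /mindeg; elim/big_ind: _ => // [a b Ha _|x _]; last exact: max_card.
exact: leq_trans (geq_minl _ _) Ha.
Qed.

Lemma min_kTDSP S :
  reflect (is_kTDS e k S /\ forall v, v \in S -> exists u, kopn S v u)
          (is_min_kTDS e k S).
Proof.
apply: (iffP andP) => -[SkTDS Spriv]; split => //.
- move=> v vS; move/forallP/(_ (S :\ v)): Spriv; rewrite properD1 //=.
  case/forallPn => u; rewrite -ltnNge setIDA => lt_u.
  have le_u := forallP SkTDS u.
  have card_u := cardsD1 v (nbhd e u :&: S); rewrite inE vS andbT in card_u.
  exists u; rewrite /kopn; case: (v \in nbhd e u) card_u => /= card_u.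
    by apply/eqP; lia.
  lia.
- apply/forallP => S'; apply/implyP => /properP [sS'S [v vS vS']].
  have [u /andP [vNu /eqP card_u]] := Spriv v vS.
  apply/forallPn; exists u; rewrite -ltnNge.
  have sub_u : nbhd e u :&: S' \subset (nbhd e u :&: S) :\ v.
    by rewrite setDE -setIA setIS // subsetI sS'S subsetC sub1set inE vS'.
  have := cardsD1 v (nbhd e u :&: S); rewrite inE vNu vS card_u.
  move: (subset_leq_card sub_u); lia.
Qed.

Lemma upper_kTDN_ge S : is_min_kTDS e k S -> #|S| <= upper_kTDN e k.
Proof. by move=> minS; rewrite /upper_kTDN (bigD1 S) //= leq_maxl. Qed.

Lemma upper_kTDN_le_card : upper_kTDN e k <= #|T|.
Proof. by apply/bigmax_leqP => S _; exact: max_card. Qed.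

Lemma min_kTDS_card_add_mindeg D :
  is_min_kTDS e k D -> #|D| + mindeg e <= #|T| + k.
Proof.
case/min_kTDSP => _ Dpriv.
have [->|[v vD]] := set_0Vmem D; first by rewrite cards0; have := mindeg_le_card; lia.
have [u /andP [_ /eqP card_u]] := Dpriv v vD.
have outside_u : #|nbhd e u :\: D| <= #|~: D|.
  by apply: subset_leq_card; rewrite setDE subsetIr.
have := cardsID D (nbhd e u); have := cardsC D; have := mindeg_le_deg u; lia.
Qed.

Lemma upper_kTDN_add_mindeg : upper_kTDN e k + mindeg e <= #|T| + k.
Proof.
have [none|some] := posnP #|[pred S : {set T} | is_min_kTDS e k S]|.
  rewrite /upper_kTDN big_pred0 => [|S]; last exact: card0_eq none S.
  by have := mindeg_le_card; lia.
rewrite /upper_kTDN; have [D minD ->] := eq_bigmax_cond (fun S : {set T} => #|S|) some.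
exact: min_kTDS_card_add_mindeg.
Qed.

End MinimalKTDS.

Section CartesianLayer.
Variables (T1 T2 : finType) (g : rel T1) (h : rel T2).
Implicit Types (S : {set T1}) (x : T1) (b : T2).

Lemma layer_sub_nbhd_cartesian S x b :
  [set (y, b) | y in nbhd g x :&: S]
    \subset nbhd (cartesian g h) (x, b) :&: setX S [set: T2].
Proof.
apply/subsetP => _ /imsetP [y + ->]; rewrite !inE => /andP [gxy yS].
by rewrite /cartesian /= eqxx gxy orbT yS.
Qed.

Lemma nbhd_cartesian_layer S x b : x \notin S ->
  nbhd (cartesian g h) (x, b) :&: setX S [set: T2]
    = [set (y, b) | y in nbhd g x :&: S].
Proof.
move=> xS; apply/eqP; rewrite eqEsubset layer_sub_nbhd_cartesian andbT.
apply/subsetP => -[y c]; rewrite !inE andbT /cartesian /= => /andP [+ yS].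
case/orP => /andP [/eqP xy adj]; first by rewrite xy yS in xS.
by apply/imsetP; exists y; rewrite ?inE ?adj ?yS // xy.
Qed.

Lemma card_layer S x b : #|[set (y, b) | y in nbhd g x :&: S]| = #|nbhd g x :&: S|.
Proof. by rewrite card_imset // => y z []. Qed.

Lemma min_kTDS_setXT k S :
  is_kTDS g k S -> (forall v, v \in S -> exists v', ext_kopn g k S v v') ->
  is_min_kTDS (cartesian g h) k (setX S [set: T2]).
Proof.
move=> /forallP SkTDS Sext; apply/min_kTDSP; split.
  apply/forallP => -[x b]; apply: leq_trans (SkTDS x) _.
  by rewrite -(card_layer S x b) subset_leq_card ?layer_sub_nbhd_cartesian.
move=> [s b]; rewrite !inE andbT /= => sS.
have [s' /and3P [+ s'S /eqP card_s']] := Sext s sS; rewrite inE => gs's.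
exists (s', b); rewrite /kopn nbhd_cartesian_layer // card_layer card_s' eqxx.
by rewrite andbT inE /cartesian /= eqxx gs's orbT.
Qed.

End CartesianLayer.

Lemma upper_kTDN_cartesian_ge (T1 T2 : finType) (g : rel T1) (h : rel T2) k :
  Gamma_external g k -> upper_kTDN g k * #|T2| <= upper_kTDN (cartesian g h) k.
Proof.
case=> S [/andP [/andP [SkTDS _] /eqP <-] Sext].
rewrite -cardsT -cardsX upper_kTDN_ge //.
exact: min_kTDS_setXT.
Qed.

Theorem mainTheorem12 (T1 T2 : finType) (g : rel T1) (h : rel T2) (k : nat) :
  2 <= k ->
  simple_graph g -> simple_graph h ->
  0 < #|T1| -> 0 < #|T2| ->
  k <= mindeg g ->
  Gamma_external g k ->
  (k.+1 <= mindeg h ->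
     upper_kTDN g k * (upper_kTDN h k + mindeg h - k)
       <= upper_kTDN (cartesian g h) k) /\
  (regular h k ->
     upper_kTDN g k * upper_kTDN h k <= upper_kTDN (cartesian g h) k).
Proof.
move=> _ _ _ _ _ _ Gext.
have prod_ge := upper_kTDN_cartesian_ge h Gext.
split=> _; apply: leq_trans prod_ge; rewrite leq_mul2l.
  by have := upper_kTDN_add_mindeg h k; rewrite orbC; lia.
by rewrite upper_kTDN_le_card orbT.
Qed.
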